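(* Let $\mathcal M$ be a stopping finite MDP with sink state $z$, and $\Phi=(F,r)$ a weighted reachability objective with outcome vector $\vec o=(o_1,\dots,o_k)$. Let $\mathcal Q=(\mathrm{obtainset}(o_1),\dots,\mathrm{obtainset}(o_k))$. Then $$\{\mathrm{prospect}(\mathcal M^\sigma,\Phi):\sigma\in\Sigma\}=\{(\vec o,\vec p):\vec p\in\mathcal P^{\mathcal Q}_{\mathcal M}\}.$$
   Context: MDP: $\mathcal M=(S,s_0,A,\delta)$ finite; $\Sigma$ the set of all history-dependent randomized strategies; $\mathbb P^\sigma_{\mathcal M}$ the induced measure on infinite paths from $s_0$. Weighted reachability objective $\Phi=(F,r)$: absorbing targets $F\subseteq S$, $r:F\to\mathbb Q$ with $r(s)\ne0$; $\Phi(\rho)=r$ of the first visited target, $0$ if none. Outcomes $\mathrm{outc}(\Phi)=r(F)\cup\{0\}$ listed increasingly $o_1<\dots<o_k$. $\mathrm{prospect}(\mathcal M^\sigma,\Phi)=(\vec o,\vec p)$ with $p_i=\mathbb P^\sigma_{\mathcal M}[\Phi(\rho)=o_i]$. $\mathcal M$ is stopping with sink $z$ if $z\notin F$ is an absorbing state and $\mathbb P^\sigma_{\mathcal M}[\lozenge(F\cup\{z\})]=1$ for all $\sigma$, where $\lozenge X$ is the set of paths visiting $X$. In a stopping MDP, $\mathrm{obtainset}(o_i)=\{s\in F:r(s)=o_i\}$ for $o_i\ne0$ and $\mathrm{obtainset}(0)=\{z\}$. For a tuple of target sets $\mathcal Q=(F_1,\dots,F_n)$, the achievable set is $\mathcal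 A^{\mathcal Q}_{\mathcal M}=\{(p_1,\dots,p_n):\exists\sigma\in\Sigma\,\forall i.\ p_i\le\mathbb P^\sigma_{\mathcal M}[\lozenge F_i]\}$ and the Pareto frontier is $\mathcal P^{\mathcal Q}_{\mathcal M}=\{\vec u\in\mathcal A^{\mathcal Q}_{\mathcal M}:\neg\exists \vec v\in\mathcal A^{\mathcal Q}_{\mathcal M}.\ \vec u\ne \vec v\wedge \vec u\le \vec v\}$ (componentwise order). *)

From HB Require Import structures.
From mathcomp Require Import all_boot all_order all_algebra.
From mathcomp Require Import boolp classical_sets reals.
Set Implicit Arguments. Unset Strict Implicit. Unset Printing Implicit Defensive.
Import Order.TTheory GRing.Theory Num.Theory.
Local Open Scope ring_scope.
Local Open Scope classical_set_scope.

Section MDP.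
Variables (R : realType) (S A : finType).
(* MDP M = (S, s0, A, delta): en s = actions enabled in s, delta s a = distribution
   over successors (only meaningful for enabled a). *)
Variable en : S -> {set A}.
Variable delta : S -> A -> {ffun S -> R}.

Definition is_mdp : Prop :=
  (forall s, en s != finset.set0) /\
  (forall s a, a \in en s ->
     (forall t, 0 <= delta s a t) /\ \sum_t delta s a t = 1).

Definition absorbing (s : S) : Prop := forall a, a \in en s -> delta s a s = 1.

(* history-dependent randomized strategies: a history is the sequence of past
   (state, action) pairs together with the current state *)
Record strategy := Strategy {
  strat :> seq (S * A) -> S -> {ffun A -> R};
  strat_ge0 : forall h s a, 0 <= strat h s a;
  strat_sum1 : forall h s, \sum_a strat h s a = 1;
  strat_supp : forall h s a, a \notin en s -> strat h s a = 0 }.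

Variable s0 : S.

(* probability weight of the finite path s_0 a_0 s_1 ... a_{n-1} s_n,
   given as rest = [(s_0,a_0);...;(s_{n-1},a_{n-1})] and last = s_n *)
Fixpoint pw (sigma : strategy) (pre rest : seq (S * A)) (last : S) : R :=
  match rest with
  | [::] => 1
  | (s, a) :: rest' =>
      let nxt := if rest' is (s', _) :: _ then s' else last in
      sigma pre s a * delta s a nxt * pw sigma (rcons pre (s, a)) rest' last
  end.

Definition path_states (h : seq (S * A)) (last : S) : seq S :=
  rcons (map fst h) last.

Definition path_weight (sigma : strategy) (h : seq (S * A)) (last : S) : R :=
  (if head last (path_states h last) == s0 then 1 else 0) * pw sigma [::] h last.

(* P^sigma of the cylinder event "the first n+1 states satisfy E" *)
Definition probn (sigma : strategy) (n : nat) (E : pred (seq S)) : R :=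
  \sum_(t : n.-tuple (S * A)) \sum_(s : S)
     (if E (path_states t s) then path_weight sigma t s else 0).

(* P^sigma[<> X] = lim_n P^sigma[X visited within n steps] *)
Definition Preach (sigma : strategy) (X : {set S}) : R :=
  sup (range (fun n => probn sigma n (fun ss => has (fun x => x \in X) ss))).

Section Objective.
Variables (F : {set S}) (r : S -> rat).

Definition Phi_fin (ss : seq S) : rat :=
  if has (fun x => x \in F) ss
  then r (nth s0 ss (find (fun x => x \in F) ss)) else 0.

Definition PPhi (sigma : strategy) (o : rat) : R :=
  if o != 0 then
    sup (range (fun n => probn sigma n (fun ss => Phi_fin ss == o)))
  else
    inf (range (fun n => probn sigma n (fun ss => ~~ has (fun x => x \in F) ss))).

Definition outc : seq rat := sort <=%R (undup (0 :: [seq r s | s in F])).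

Definition prospect (sigma : strategy) : seq rat * {ffun 'I_(size outc) -> R} :=
  (outc, [ffun i : 'I_(size outc) => PPhi sigma (nth 0 outc i)]).

Definition obtainset (z : S) (o : rat) : {set S} :=
  if o != 0 then finset.finset (fun s => (s \in F) && (r s == o)) else finset.set1 z.

Definition stopping (z : S) : Prop :=
  z \notin F /\ absorbing z /\ forall sigma : strategy, Preach sigma (F :|: finset.set1 z) = 1.

End Objective.

Definition achievable (n : nat) (Q : 'I_n -> {set S}) : set {ffun 'I_n -> R} :=
  [set p | exists sigma : strategy, forall i, p i <= Preach sigma (Q i)].

Definition pareto (n : nat) (Q : 'I_n -> {set S}) : set {ffun 'I_n -> R} :=
  [set u | achievable Q u /\
           ~ (exists v, achievable Q v /\ u <> v /\ forall i, u i <= v i)].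

End MDP.

(* For every strategy sigma, write w(sigma) for the vector of outcome
   probabilities P[Phi = o_i] and Q_i for obtainset(o_i).  Three facts carry
   the proof:
   (a) w_i(sigma) <= P^sigma[<> Q_i]: a path with outcome o_i <> 0 visits Q_i,
       and since the MDP is stopping, almost every path avoiding F reaches z;
   (b) sum_i w_i(sigma) >= 1, because the events Phi = o_i partition all paths;
   (c) sum_i P^tau[<> Q_i] <= 1 for every tau, because the Q_i are disjoint sets
       of absorbing states, so a path of positive probability visits at most
       one of them.
   By (a)-(c), w(sigma) is achievable and no achievable vector can dominate it
   without having the same sum, so w(sigma) is Pareto optimal.  Conversely a
   Pareto optimal vector achieved by sigma equals (P^sigma[<> Q_i])_i, and so
   does w(sigma) by (a) and its Pareto optimality. *)

From HB Require Import structures.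
From mathcomp Require Import all_boot all_order all_algebra.
From mathcomp Require Import boolp classical_sets reals lra.
Import Order.TTheory GRing.Theory Num.Theory.
Set Implicit Arguments. Unset Strict Implicit. Unset Printing Implicit Defensive.
Local Open Scope ring_scope.
Local Open Scope classical_set_scope.

Section RangeSupInf.
Variable R : realType.
Implicit Types (f b c d : nat -> R) (a x : R).

Lemma ub_le_sup_range f n : has_ubound (range f) -> f n <= sup (range f).
Proof. by move=> ubf; apply: ub_le_sup ubf _ (imageT f n). Qed.

Lemma ge_sup_range f x : (forall n, f n <= x) -> sup (range f) <= x.
Proof. by move=> lefx; apply: ge_sup; [exists (f 0%N), 0%N | move=> _ [n _ <-]]. Qed.

Lemma ge_inf_range f n : has_lbound (range f) -> inf (range f) <= f n.
Proof. by move=> lbf; apply: ge_inf lbf _ (imageT f n). Qed.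

Lemma lb_le_inf_range f x : (forall n, x <= f n) -> x <= inf (range f).
Proof. by move=> lexf; apply: lb_le_inf; [exists (f 0%N), 0%N | move=> _ [n _ <-]]. Qed.

Lemma inf_sup_range_le b c d a :
  has_lbound (range b) -> has_ubound (range c) ->
  (forall n, b n + d n <= a + c n) ->
  inf (range b) + sup (range d) <= a + sup (range c).
Proof.
move=> lbb ubc lebdc; rewrite addrC -lerBrDr; apply: ge_sup_range => n.
have := lebdc n; have := ge_inf_range n lbb; have := ub_le_sup_range n ubc; lra.
Qed.

Lemma sum_sup_range_le (I : finType) (f : I -> nat -> R) x :
  (forall i, has_ubound (range (f i))) ->
  (forall i, {homo f i : m n / (m <= n)%N >-> m <= n}) ->
  (forall n, \sum_i f i n <= x) -> \sum_i sup (range (f i)) <= x.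
Proof.
move=> ubf homf lefx; apply/ler_addgt0Pr => e e_gt0.
pose eps := e / #|I|.+1%:R.
have eps_gt0 : 0 < eps by rewrite divr_gt0.
have /choice[N supN] : forall i, exists n, sup (range (f i)) - eps < f i n.
  move=> i; have supf : has_sup (range (f i)) by split; [exists (f i 0%N), 0%N | exact: ubf].
  by have [_ [n _ <-] ?] := sup_adherent eps_gt0 supf; exists n.
pose M := (\max_i N i)%N.
have : \sum_i sup (range (f i)) <= \sum_i (f i M + eps).
  apply: ler_sum => i _; have le_NM : (N i <= M)%N by exact: leq_bigmax.
  by have := supN i; have := homf i _ _ le_NM; lra.
rewrite big_split sumr_const /= => le_sup_sum.
have : eps *+ #|I| <= e.
  rewrite -mulr_natr /eps -mulrA ger_pMr // mulrC ler_pdivrMr ?ltr0n // mul1r ler_nat.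
  exact: leqnSn.
by have := lefx M; lra.
Qed.

End RangeSupInf.

Lemma sum_tupleS (V : nmodType) (T : finType) n (G : n.+1.-tuple T -> V) :
  \sum_t G t = \sum_(t : n.-tuple T) \sum_(x : T) G [tuple of rcons t x].
Proof.
rewrite pair_big /=.
rewrite (reindex (fun p : n.-tuple T * T => [tuple of rcons p.1 p.2])) //.
exists (fun t : n.+1.-tuple T =>
  ([tuple of belast (thead t) (behead t)], last (thead t) (behead t))).
  move=> [t x] _; congr (_, _); last by case: t => [[|y t] Ht] //=; rewrite last_rcons.
  by apply: val_inj; case: t => [[|y t] Ht] //=; rewrite belast_rcons.
by move=> t _; apply: val_inj; case: t => [[|y t] Ht] //=; rewrite -lastI.
Qed.

Lemma sum_unique_indicator (V : pzSemiRingType) (I : finType) (b : pred I) :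
  (forall i j, b i -> b j -> i = j) -> \sum_i (b i)%:R = [exists i, b i]%:R :> V.
Proof.
move=> b_uniq; case: (pickP b) => [i bi | nob]; last first.
  by rewrite big1 => [|i _]; [case: existsP => // -[i]; rewrite nob | rewrite nob].
have -> : [exists i, b i] by apply/existsP; exists i.
rewrite (bigD1 i) //= bi big1 ?addr0 // => j j_neq_i.
have [bj|//] := boolP (b j).
by move: j_neq_i; rewrite (b_uniq _ _ bj bi) eqxx.
Qed.

Section AbsorbingSequences.
Variables (T : eqType) (X : pred T).

Definition absorb_step (x y : T) := X x ==> (y == x).

Lemma absorb_path_const x l : path absorb_step x l -> X x -> all (pred1 x) l.
Proof.
elim: l x => [|y l IH] x //= /andP[/implyP step_xy path_yl] Xx.
by have /eqP yx := step_xy Xx; rewrite -yx eqxx IH // yx.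
Qed.

Lemma absorb_sorted_eq ss :
  sorted absorb_step ss -> {in ss &, forall x y, X x -> X y -> x = y}.
Proof.
elim: ss => [|x0 l IH] //= path_l x y.
have [X0 | nX0] := boolP (X x0).
  have /allP l_x0 := absorb_path_const path_l X0.
  by rewrite !inE => /predU1P[->|/l_x0/eqP->] /predU1P[->|/l_x0/eqP->].
rewrite !inE => /predU1P[->|x_l]; first by rewrite (negbTE nX0).
move=> /predU1P[->|y_l]; first by move=> _; rewrite (negbTE nX0).
exact: IH (path_sorted path_l) _ _ x_l y_l.
Qed.

End AbsorbingSequences.

Section PathMeasure.
Variables (R : realType) (S A : finType) (en : S -> {set A})
  (delta : S -> A -> {ffun S -> R}) (s0 : S).
Hypothesis delta_distr : forall s a, a \in en s ->
  (forall t, 0 <= delta s a t) /\ \sum_t delta s a t = 1.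
Implicit Types (sigma : strategy R en) (h : seq (S * A)) (f g : seq S -> R).

Lemma strategy_delta_ge0 sigma h s a t : 0 <= sigma h s a * delta s a t.
Proof.
have [a_en|a_off] := boolP (a \in en s); last by rewrite strat_supp // mul0r.
by rewrite mulr_ge0 ?strat_ge0 ?(delta_distr a_en).1.
Qed.

Lemma sum_strategy_delta sigma h s : \sum_a \sum_t sigma h s a * delta s a t = 1.
Proof.
rewrite -(strat_sum1 sigma h s); apply: eq_bigr => a _; rewrite -mulr_sumr.
have [a_en|a_off] := boolP (a \in en s); last by rewrite strat_supp // !mul0r.
by rewrite (delta_distr a_en).2 mulr1.
Qed.

Lemma pw_ge0 sigma pre rest last : 0 <= pw delta sigma pre rest last.
Proof.
elim: rest pre => [|[s a] rest IH] pre //=.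
by rewrite mulr_ge0 ?strategy_delta_ge0.
Qed.

Lemma pw_rcons sigma pre rest s a last :
  pw delta sigma pre (rcons rest (s, a)) last =
  pw delta sigma pre rest s * (sigma (pre ++ rest) s a * delta s a last).
Proof.
elim: rest pre => [|[s1 a1] rest IH] pre /=; first by rewrite cats0 mulr1 mul1r.
by rewrite IH -cat_rcons !mulrA; case: rest {IH}.
Qed.

Lemma path_weight_ge0 sigma h s : 0 <= path_weight delta s0 sigma h s.
Proof. by rewrite mulr_ge0 ?pw_ge0 //; case: eqP. Qed.

Lemma path_states_rcons h s a s' :
  path_states (rcons h (s, a)) s' = rcons (path_states h s) s'.
Proof. by rewrite /path_states map_rcons. Qed.

Lemma size_path_states h s : size (path_states h s) = (size h).+1.
Proof. by rewrite size_rcons size_map. Qed.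

Lemma path_weight_rcons sigma h s a s' :
  path_weight delta s0 sigma (rcons h (s, a)) s' =
  path_weight delta s0 sigma h s * (sigma h s a * delta s a s').
Proof.
rewrite /path_weight pw_rcons path_states_rcons mulrA.
by rewrite /path_states; case: h.
Qed.

Definition expectn sigma n f : R :=
  \sum_(t : n.-tuple (S * A)) \sum_s
     f (path_states t s) * path_weight delta s0 sigma t s.

Lemma probnE sigma n E :
  probn delta s0 sigma n E = expectn sigma n (fun ss => (E ss)%:R).
Proof.
by apply: eq_bigr => t _; apply: eq_bigr => s _; case: (E _); rewrite ?mul1r ?mul0r.
Qed.

Lemma expectn_take sigma n f :
  expectn sigma n.+1 (fun ss => f (take n.+1 ss)) = expectn sigma n f.
Proof.
rewrite /expectn sum_tupleS; apply: eq_bigr => t _.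
have sum_pair (G : S * A -> R) : \sum_x G x = \sum_s \sum_a G (s, a).
  by rewrite pair_big; apply: eq_bigr => -[].
rewrite sum_pair; apply: eq_bigr => s _.
rewrite -[RHS]mulr1 -(sum_strategy_delta sigma t s) mulr_sumr.
apply: eq_bigr => a _; rewrite mulr_sumr; apply: eq_bigr => s' _.
rewrite path_weight_rcons path_states_rcons mulrA -cats1 take_size_cat //.
by rewrite size_path_states size_tuple.
Qed.

Lemma eq_expectn sigma n f g : f =1 g -> expectn sigma n f = expectn sigma n g.
Proof. by move=> fg; apply: eq_bigr => t _; apply: eq_bigr => s _; rewrite fg. Qed.

Lemma expectn_le sigma n f g :
  (forall (t : n.-tuple (S * A)) s, path_weight delta s0 sigma t s != 0 ->
     f (path_states t s) <= g (path_states t s)) ->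
  expectn sigma n f <= expectn sigma n g.
Proof.
move=> lefg; apply: ler_sum => t _; apply: ler_sum => s _.
have [->|w_neq0] := eqVneq (path_weight delta s0 sigma t s) 0; first by rewrite !mulr0.
by rewrite ler_wpM2r ?path_weight_ge0 ?lefg.
Qed.

Lemma ler_expectn sigma n f g :
  (forall ss, f ss <= g ss) -> expectn sigma n f <= expectn sigma n g.
Proof. by move=> lefg; apply: expectn_le. Qed.

Lemma expectnD sigma n f g :
  expectn sigma n (fun ss => f ss + g ss) = expectn sigma n f + expectn sigma n g.
Proof.
rewrite /expectn -big_split; apply: eq_bigr => t _; rewrite -big_split.
by apply: eq_bigr => s _; rewrite mulrDl.
Qed.

Lemma expectn_sum sigma n (I : finType) (f : I -> seq S -> R) :
  expectn sigma n (fun ss => \sum_i f i ss) = \sum_i expectn sigma n (f i).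
Proof.
rewrite /expectn [RHS]exchange_big; apply: eq_bigr => t _; rewrite [RHS]exchange_big.
by apply: eq_bigr => s _; rewrite mulr_suml.
Qed.

Lemma expectn1 sigma n : expectn sigma n (fun _ => 1) = 1.
Proof.
elim: n => [|n IH]; last by rewrite -(expectn_take sigma n (fun _ => 1)) in IH.
rewrite /expectn (big_pred1 [tuple]) => [|t]; last by rewrite [t]tuple0; apply/eqP.
rewrite (bigD1 s0) //= big1 => [|s /negbTE s_neq0].
  by rewrite mul1r addr0 /path_weight /path_states /= eqxx mul1r.
by rewrite mul1r /path_weight /path_states /= s_neq0 mul0r.
Qed.

Lemma probn_ge0 sigma n E : 0 <= probn delta s0 sigma n E.
Proof.
rewrite probnE; apply: sumr_ge0 => t _; apply: sumr_ge0 => s _.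
by rewrite mulr_ge0 ?path_weight_ge0.
Qed.

Lemma probn_le1 sigma n E : probn delta s0 sigma n E <= 1.
Proof.
rewrite probnE -[leRHS](expectn1 sigma n).
by apply: ler_expectn => ss; case: (E ss).
Qed.

Lemma has_lbound_probn sigma E : has_lbound (range (probn delta s0 sigma ^~ E)).
Proof. by exists 0 => _ [n _ <-]; apply: probn_ge0. Qed.

Lemma has_ubound_probn sigma E : has_ubound (range (probn delta s0 sigma ^~ E)).
Proof. by exists 1 => _ [n _ <-]; apply: probn_le1. Qed.

Lemma probn_has_homo sigma (X : pred S) :
  {homo probn delta s0 sigma ^~ (has X) : m n / (m <= n)%N >-> m <= n}.
Proof.
apply: homo_leq => [x|y x z|n]; [exact: lexx | exact: le_trans |].
rewrite !probnE -expectn_take; apply: ler_expectn => ss.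
by rewrite -{2}(cat_take_drop n.+1 ss) has_cat; case: has.
Qed.

Lemma absorbing_delta_eq0 x a y : a \in en x -> absorbing en delta x ->
  y != x -> delta x a y = 0.
Proof.
move=> a_en abs_x y_neq_x; have [delta_ge0 delta_sum1] := delta_distr a_en.
have : \sum_(t | t != x) delta x a t = 0.
  by apply: (addrI 1); rewrite addr0 -[RHS]delta_sum1 [in RHS](bigD1 x) //= abs_x.
by move/psumr_eq0P; apply.
Qed.

Lemma sorted_absorb_path_states (X : pred S) :
  (forall x, X x -> absorbing en delta x) ->
  forall sigma pre rest last, pw delta sigma pre rest last != 0 ->
  sorted (absorb_step X) (path_states rest last).
Proof.
move=> abs_X sigma pre rest last; elim: rest pre => [|[s a] rest IH] pre //=.
rewrite !mulf_eq0 !negb_or => /andP[/andP[sigma_neq0 delta_neq0] pw_neq0].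
case E: (path_states rest last) (IH _ pw_neq0) => [|y l];
  first by have := size_path_states rest last; rewrite E.
move=> /= path_yl; rewrite -/(path_states rest last) E /= path_yl andbT.
apply/implyP => Xs; apply: contraR delta_neq0 => y_neq_s.
have a_en : a \in en s by apply: contraNT sigma_neq0 => a_off; rewrite strat_supp.
have -> : (if rest is (s', _) :: _ then s' else last) = y.
  by move: E; case: rest {IH pw_neq0} => [|[s' a'] rest] /= [->].
by rewrite (absorbing_delta_eq0 a_en (abs_X _ Xs) y_neq_s).
Qed.

End PathMeasure.

Section Pareto.
Variables (R : realType) (S A : finType) (en : S -> {set A})
  (delta : S -> A -> {ffun S -> R}) (s0 : S) (n : nat) (Q : 'I_n -> {set S}).

Lemma pareto_of_sum_ge1 w :
  (forall tau : strategy R en, \sum_i Preach delta s0 tau (Q i) <= 1) ->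
  achievable en delta s0 Q w -> 1 <= \sum_i w i -> pareto en delta s0 Q w.
Proof.
move=> reach_le1 achw sumw_ge1; split=> // -[v [[tau le_v_reach] [w_neq_v le_wv]]].
have vw_ge0 i : true -> 0 <= v i - w i by rewrite subr_ge0.
have sum_vw : \sum_i (v i - w i) = 0.
  apply/eqP; rewrite eq_le sumr_ge0 // andbT.
  rewrite sumrB subr_le0 (le_trans _ sumw_ge1) // (le_trans _ (reach_le1 tau)) //.
  exact: ler_sum.
apply: w_neq_v; apply/ffunP => i; apply/eqP; rewrite eq_sym -subr_eq0.
exact/eqP/(psumr_eq0P vw_ge0 sum_vw).
Qed.

Lemma pareto_le_reach_eq p (sigma : strategy R en) :
  pareto en delta s0 Q p -> (forall i, p i <= Preach delta s0 sigma (Q i)) ->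
  p = [ffun i => Preach delta s0 sigma (Q i)].
Proof.
move=> [_ maxp] le_p_reach.
set reach := [ffun i => Preach delta s0 sigma (Q i)].
have [//|p_neq] := eqVneq p reach; exfalso; apply: maxp; exists reach; split.
  by exists sigma => i; rewrite ffunE.
by split=> [|i]; [apply/eqP | rewrite ffunE].
Qed.

End Pareto.

Section StoppingObjective.
Variables (R : realType) (S A : finType) (en : S -> {set A})
  (delta : S -> A -> {ffun S -> R}) (s0 : S) (F : {set S}) (r : S -> rat) (z : S).
Hypothesis delta_distr : forall s a, a \in en s ->
  (forall t, 0 <= delta s a t) /\ \sum_t delta s a t = 1.
Hypothesis F_absorbing : forall s, s \in F -> absorbing en delta s.
Hypothesis r_neq0 : forall s, s \in F -> r s != 0.
Hypothesis z_notin_F : z \notin F.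
Hypothesis z_absorbing : absorbing en delta z.
Hypothesis reach_Fz : forall sigma : strategy R en,
  Preach delta s0 sigma (F :|: finset.set1 z) = 1.

Local Notation o := (outc F r).
Local Notation Q i := (obtainset F r z (nth 0 o i)).
Implicit Types (sigma : strategy R en) (ss : seq S).

Lemma outc_uniq : uniq o.
Proof. by rewrite sort_uniq undup_uniq. Qed.

Lemma outc0 : 0 \in o.
Proof. by rewrite mem_sort mem_undup mem_head. Qed.

Lemma outcF x : x \in F -> r x \in o.
Proof. by move=> xF; rewrite mem_sort mem_undup in_cons map_f ?mem_enum ?orbT. Qed.

Lemma sum_outc_indicator c : c \in o -> \sum_(i < size o) ((nth 0 o i == c)%:R : R) = 1.
Proof.
move=> c_o; have c_idx : (index c o < size o)%N by rewrite index_mem.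
rewrite sum_unique_indicator => [|i j /eqP <- /eqP ji]; last first.
  by apply/val_inj/eqP; rewrite -(nth_uniq 0 (ltn_ord i) (ltn_ord j) outc_uniq) ji eqxx.
suff -> : [exists i : 'I_(size o), nth 0 o i == c] by [].
by apply/existsP; exists (Ordinal c_idx); rewrite nth_index.
Qed.

Lemma Phi_fin_outc ss : Phi_fin s0 F r ss \in o.
Proof. by rewrite /Phi_fin; case: ifP => [hasF|_]; [apply/outcF/nth_find | apply: outc0]. Qed.

Lemma Phi_fin_eq0 ss : (Phi_fin s0 F r ss == 0) = ~~ has (fun x => x \in F) ss.
Proof.
rewrite /Phi_fin; case: ifP => [hasF|_]; last by rewrite eqxx.
exact/negbTE/r_neq0/nth_find.
Qed.

Lemma Phi_fin_obtainset c ss : c != 0 -> Phi_fin s0 F r ss = c ->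
  has (fun x => x \in obtainset F r z c) ss.
Proof.
rewrite /Phi_fin /obtainset => c_neq0; case: ifP => [hasF r_first|_ c0]; last first.
  by rewrite -c0 eqxx in c_neq0.
apply/hasP; exists (nth s0 ss (find (fun x => x \in F) ss)); first by rewrite mem_nth // -has_find.
by rewrite c_neq0 finset.in_set r_first eqxx andbT; apply: nth_find.
Qed.

Lemma obtainset_sub c x : x \in obtainset F r z c -> x \in F :|: finset.set1 z.
Proof.
rewrite /obtainset finset.in_setU; case: ifP => _; last by move=> ->; rewrite orbT.
by rewrite finset.in_set => /andP[->].
Qed.

Lemma obtainset_val c x : x \in obtainset F r z c -> c = if x \in F then r x else 0.
Proof.
rewrite /obtainset; case: ifP => [_|/negbFE/eqP-> ].
  by rewrite finset.in_set => /andP[-> /eqP].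
by rewrite finset.in_set1 => /eqP->; rewrite (negbTE z_notin_F).
Qed.

Lemma obtainset_outc_inj (i j : 'I_(size o)) x : x \in Q i -> x \in Q j -> i = j.
Proof.
move=> /obtainset_val xi /obtainset_val xj; apply/val_inj/eqP.
by rewrite -(nth_uniq 0 (ltn_ord i) (ltn_ord j) outc_uniq) xi xj.
Qed.

Lemma PPhi_le_Preach sigma i :
  PPhi delta s0 F r sigma (nth 0 o i) <= Preach delta s0 sigma (Q i).
Proof.
rewrite /PPhi /Preach; have [oi_eq0|oi_neq0] := eqVneq (nth 0 o i) 0; last first.
  apply: ge_sup_range => n.
  apply: le_trans (ub_le_sup_range n (has_ubound_probn s0 delta_distr _ _)).
  rewrite !probnE; apply: (ler_expectn s0 delta_distr) => ss; rewrite ler_nat.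
  by case: eqP => // /(Phi_fin_obtainset oi_neq0) ->.
rewrite oi_eq0 /obtainset eqxx /=.
have le_Fz n : probn delta s0 sigma n (fun ss => ~~ has (fun x => x \in F) ss) +
    probn delta s0 sigma n (fun ss => has (fun x => x \in F :|: finset.set1 z) ss) <=
  1 + probn delta s0 sigma n (fun ss => has (fun x => x \in finset.set1 z) ss).
  rewrite !probnE -expectnD -[X in _ <= X + _](expectn1 s0 delta_distr sigma n) -expectnD.
  apply: (ler_expectn s0 delta_distr) => ss.
  have -> : has (fun x => x \in F :|: finset.set1 z) ss =
      has (fun x => x \in F) ss || has (fun x => x \in finset.set1 z) ss.
    by rewrite -has_predU; apply: eq_has => x; rewrite finset.in_setU.
  by case: (has _ ss); case: (has _ ss); rewrite /=; lra.
have := inf_sup_range_le (has_lbound_probn s0 delta_distr _ _)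
  (has_ubound_probn s0 delta_distr _ _) le_Fz.
by have := reach_Fz sigma; rewrite /Preach => ->; lra.
Qed.

Lemma one_le_sum_PPhi sigma :
  1 <= \sum_(i < size o) PPhi delta s0 F r sigma (nth 0 o i).
Proof.
have i0_lt : (index (0 : rat) o < size o)%N by rewrite index_mem outc0.
pose i0 := Ordinal i0_lt; have o_i0 : nth 0 o i0 = 0 by rewrite nth_index ?outc0.
pose a (i : 'I_(size o)) n := probn delta s0 sigma n (fun ss => Phi_fin s0 F r ss == nth 0 o i).
have ub_a i : has_ubound (range (a i)) by apply: has_ubound_probn.
have sum_a n : \sum_i a i n = 1.
  rewrite /a (eq_bigr _ (fun i _ => probnE _ _ _ _ _)) -expectn_sum.
  rewrite -[RHS](expectn1 s0 delta_distr sigma n); apply: eq_expectn => ss.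
  rewrite -[RHS](sum_outc_indicator (Phi_fin_outc ss)).
  by apply: eq_bigr => i _; rewrite eq_sym.
have PPhi_i0 : PPhi delta s0 F r sigma (nth 0 o i0) = inf (range (a i0)).
  rewrite /PPhi /a o_i0 eqxx /=.
  suff -> : (fun ss => Phi_fin s0 F r ss == 0) = (fun ss => ~~ has (fun x => x \in F) ss) by [].
  by apply/funext => ss; rewrite Phi_fin_eq0.
have PPhi_i i : i != i0 -> PPhi delta s0 F r sigma (nth 0 o i) = sup (range (a i)).
  move=> i_neq_i0; rewrite /PPhi ifT //; apply: contra i_neq_i0 => /eqP oi0.
  by apply/eqP/val_inj; rewrite /= -oi0 index_uniq ?outc_uniq.
rewrite (bigD1 i0) //= PPhi_i0 (eq_bigr _ PPhi_i).
suff : 1 - \sum_(i | i != i0) sup (range (a i)) <= inf (range (a i0)) by lra.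
apply: lb_le_inf_range => n; have := sum_a n; rewrite (bigD1 i0) //=.
have : \sum_(i | i != i0) a i n <= \sum_(i | i != i0) sup (range (a i)).
  by apply: ler_sum => i _; apply: ub_le_sup_range.
lra.
Qed.

Lemma sum_Preach_le1 sigma : \sum_(i < size o) Preach delta s0 sigma (Q i) <= 1.
Proof.
apply: sum_sup_range_le => [i|i|n].
- exact: has_ubound_probn.
- exact: probn_has_homo.
rewrite (eq_bigr _ (fun i _ => probnE _ _ _ _ _)) -expectn_sum.
rewrite -[leRHS](expectn1 s0 delta_distr sigma n).
apply: (expectn_le delta_distr) => t s w_neq0.
rewrite sum_unique_indicator => [|i j]; first by case: existsP.
move=> /hasP[x x_ss x_Qi] /hasP[y y_ss y_Qj].
have Fz_absorbing x' : x' \in F :|: finset.set1 z -> absorbing en delta x'.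
  by rewrite finset.in_setU finset.in_set1 => /orP[/F_absorbing // | /eqP->].
have pw_neq0 : pw delta sigma [::] t s != 0.
  by move: w_neq0; rewrite mulf_eq0 negb_or => /andP[].
have sorted_ss := sorted_absorb_path_states delta_distr Fz_absorbing pw_neq0.
have xy := absorb_sorted_eq sorted_ss x_ss y_ss (obtainset_sub x_Qi) (obtainset_sub y_Qj).
by apply: (obtainset_outc_inj x_Qi); rewrite xy.
Qed.

End StoppingObjective.

Theorem mainTheorem4 (R : realType) (S A : finType) (s0 : S)
  (en : S -> {set A}) (delta : S -> A -> {ffun S -> R})
  (F : {set S}) (r : S -> rat) (z : S) :
  is_mdp en delta ->
  (forall s, s \in F -> absorbing en delta s) ->
  (forall s, s \in F -> r s != 0) ->
  stopping en delta s0 F z ->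
  [set prospect delta s0 F r sigma | sigma in [set: @strategy R S A en]] =
  [set (outc F r, p) | p in
     pareto en delta s0 (fun i : 'I_(size (outc F r)) => obtainset F r z (nth 0 (outc F r) i))].
Proof.
move=> [_ delta_distr] F_absorbing r_neq0 [z_notin_F [z_absorbing reach_Fz]].
have prospect_pareto (sigma : strategy R en) : pareto en delta s0
    (fun i : 'I_(size (outc F r)) => obtainset F r z (nth 0 (outc F r) i))
    (prospect delta s0 F r sigma).2.
  apply: pareto_of_sum_ge1.
  - exact: (sum_Preach_le1 s0 r delta_distr F_absorbing z_notin_F z_absorbing).
  - by exists sigma => i; rewrite ffunE; apply: PPhi_le_Preach.
  - rewrite (eq_bigr _ (fun i _ => ffunE _ i)).
    exact: (one_le_sum_PPhi s0 delta_distr r_neq0 sigma).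
apply/seteqP; split=> y [x].
  by move=> _ <-; exists (prospect delta s0 F r x).2.
move=> x_pareto <-; have [[sigma le_x_reach] _] := x_pareto; exists sigma => //.
rewrite [prospect _ _ _ _ _]surjective_pairing; congr (_, _).
rewrite (pareto_le_reach_eq x_pareto le_x_reach).
by apply: pareto_le_reach_eq (prospect_pareto sigma) _ => i; rewrite ffunE; apply: PPhi_le_Preach.
Qed.
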